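(* Let $A\in M_n(\mathbb{C})$, $x\in\mathbb{C}S^n$, and let $B_r$ be a ball of radius $r>0$ centered at $x$ in $\mathbb{C}^n$. Then $f_A(\mathbb{C}S^n\cap B_r)$ is a convex subset of $\mathbb{C}$.
   Context: $\mathbb{C}S^n$ is the unit sphere of $\mathbb{C}^n$ and $f_A(y)=y^*Ay$. *)

From HB Require Import structures.
From mathcomp Require Import all_boot all_order all_algebra.
From mathcomp Require Import complex.
From mathcomp Require Import reals.
Set Implicit Arguments. Unset Strict Implicit. Unset Printing Implicit Defensive.
Import Order.TTheory GRing.Theory Num.Theory.
Local Open Scope ring_scope.

Definition vnorm (R : realType) (n : nat) (v : 'cV[R[i]]_n) : R[i] :=
  sqrtC (\sum_(k < n) `|v k 0| ^+ 2).

Definition adjv (R : realType) (n : nat) (y : 'cV[R[i]]_n) : 'rV[R[i]]_n :=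
  (map_mx Num.conj y)^T.

Definition fA (R : realType) (n : nat) (A : 'M[R[i]]_n) (y : 'cV[R[i]]_n) : R[i] :=
  (adjv y *m A *m y) 0 0.

Definition unit_sphere (R : realType) (n : nat) (y : 'cV[R[i]]_n) : Prop :=
  vnorm y = 1.

Definition cball (R : realType) (n : nat) (x : 'cV[R[i]]_n) (r : R) (y : 'cV[R[i]]_n) : Prop :=
  vnorm (y - x) < (r%:C)%C.

Definition convexC (R : realType) (S : R[i] -> Prop) : Prop :=
  forall a b : R[i], S a -> S b -> forall t : R, 0 <= t <= 1 ->
    S (((1 - t)%:C)%C * a + (t%:C)%C * b).

(* Let y1, y2 be in the sphere and the ball and look for y = al y1 + be y2.
   The requirements |y| = 1, f_A(y) = (1 - t) f_A(y1) + t f_A(y2) and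
   |<x, y>|^2 >= (1 - t) |<x, y1>|^2 + t |<x, y2>|^2 are affine in the rank-one
   Hermitian matrix X = v v^* with v = (al, be), and the rank-two matrix
   D = diag (1 - t, t) meets them.  Move along a Hermitian K preserving the two
   equalities: det (D + rho K) is a quadratic in rho with nonnegative constant
   term and negative leading coefficient (K is indefinite because
   |<y1, y2>| < 1), so it vanishes at some rho of the sign that does not
   decrease the third quantity.  A unit phase then makes <x, y> real and
   nonnegative; as |<x, yi>| >= Re <x, yi> > 1 - r^2/2, the third requirement
   gives |<x, y>| > 1 - r^2/2, which puts y in the ball. *)

From HB Require Import structures.
From mathcomp Require Import all_boot all_order all_algebra.
From mathcomp Require Import complex reals.
From mathcomp Require Import ring lra.
Import Order.TTheory GRing.Theory Num.Theory.
Local Open Scope ring_scope.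

Section RealFacts.
Context {R : rcfType}.

Lemma quadratic_root_signed (a b c e : R) : a < 0 -> 0 <= c ->
  exists rho : R, a * rho ^+ 2 + b * rho + c = 0 /\ 0 <= rho * e.
Proof.
move=> a_lt0 c_ge0.
set s := Num.sqrt (b ^+ 2 - 4 * a * c).
have s_ge0 : 0 <= s by exact: sqrtr_ge0.
have s2 : s ^+ 2 = b ^+ 2 - 4 * a * c by rewrite sqr_sqrtr //; nra.
have b_le_s : `|b| <= s.
  by rewrite -(ger0_norm s_ge0) -ler_sqr ?nnegrE // !real_normK ?num_real //; nra.
have a_neq0 : a != 0 by rewrite lt_eqF.
pose sg : R := if 0 <= e then 1 else -1.
have [rho rhoE] : exists rho, 2 * a * rho = - b - sg * s.
  by exists ((- b - sg * s) / (2 * a)); rewrite mulrC divfK // mulf_neq0 // pnatr_eq0.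
exists rho; split.
- apply: (@mulfI _ (4 * a)); first by rewrite mulf_neq0 // pnatr_eq0.
  have sg2 : sg ^+ 2 = 1 by rewrite /sg; case: ifP; rewrite ?sqrrN expr1n.
  have -> : 4 * a * (a * rho ^+ 2 + b * rho + c) =
    (2 * a * rho) ^+ 2 + 2 * b * (2 * a * rho) + 4 * a * c by ring.
  rewrite rhoE mulr0.
  have -> : (- b - sg * s) ^+ 2 = b ^+ 2 + 2 * b * sg * s + sg ^+ 2 * s ^+ 2 by ring.
  by rewrite sg2 s2; ring.
- have [b_le b_ge] : b <= s /\ - b <= s.
    by have := ler_norm b; have := ler_norm (- b); rewrite normrN; lra.
  move: rhoE; rewrite /sg; case: ifP => e_ge0 rhoE.
    by apply: mulr_ge0 => //; nra.
  have e_lt0 : e < 0 by rewrite ltNge e_ge0.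
  by apply: mulr_le0; nra.
Qed.

Lemma diag_ge0_of_trace1 {m1 m2 s : R} :
  s ^+ 2 <= 4 * (m1 * m2) -> m1 + m2 + s = 1 -> 0 <= m1 /\ 0 <= m2.
Proof.
move=> hs htr.
have amgm : 4 * (m1 * m2) <= (m1 + m2) ^+ 2 by have := sqr_ge0 (m1 - m2); nra.
have prod_ge0 : 0 <= m1 * m2 by have := sqr_ge0 s; lra.
have s_le : s <= 1 / 2.
  have -> : s = 1 - (m1 + m2) by lra.
  nra.
by split; rewrite leNgt; apply/negP => hlt0; nra.
Qed.

Lemma lt_sqrt_convex {c x1 x2 n1 n2 N t : R} : 0 <= t <= 1 ->
  c < x1 -> c < x2 -> x1 ^+ 2 <= n1 -> x2 ^+ 2 <= n2 ->
  (1 - t) * n1 + t * n2 <= N -> c < Num.sqrt N.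
Proof.
move=> t01 cx1 cx2 xn1 xn2 hN.
have [c_lt0|c_ge0] := ltP c 0; first by apply: (lt_le_trans c_lt0); exact: sqrtr_ge0.
have cn1 : c ^+ 2 < n1 by nra.
have cn2 : c ^+ 2 < n2 by nra.
have cN : c ^+ 2 < N.
  have w1 : 0 <= (1 - t) * (n1 - c ^+ 2) by apply: mulr_ge0; lra.
  have [t0|t_gt0] := eqVneq t 0; first by rewrite t0 in hN; lra.
  have w2 : 0 < t * (n2 - c ^+ 2) by apply: mulr_gt0; rewrite ?lt0r ?t0; lra.
  lra.
by rewrite -(ger0_norm c_ge0) -sqrtr_sqr ltr_sqrt //; nra.
Qed.
End RealFacts.

Section ComplexScalars.
Context {R : rcfType}.
Local Notation C := R[i].
Local Notation Re := complex.Re.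
Local Notation "x %:C" := (x%:C)%C.

Lemma conjC_realc (x : R) : (x%:C)^* = x%:C :> C.
Proof. exact: conjc_real. Qed.

Lemma conjC_fixedE (z : C) : z^* = z -> (Re z)%:C = z.
Proof. by move=> zJ; apply: RRe_real; rewrite CrealE zJ. Qed.

Lemma mul_conjC_ReE (z : C) : (Re (z^* * z))%:C = z^* * z.
Proof. by apply: conjC_fixedE; rewrite rmorphM /= conjCK mulrC. Qed.

Lemma Re_mul_conjC_ge0 (z : C) : 0 <= Re (z^* * z).
Proof. by rewrite -ler0c mul_conjC_ReE mulrC mul_conjC_ge0. Qed.

Lemma sqr_Re_le_mul_conjC (z : C) : Re z ^+ 2 <= Re (z^* * z).
Proof. by case: z => a b /=; nra. Qed.

Lemma Re_cross_sqr_le (g d : C) :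
  Re (d^* * g + d * g^*) ^+ 2 <= 4 * Re (g^* * g) * Re (d^* * d).
Proof.
by case: g => g1 g2; case: d => d1 d2 /=; have := sqr_ge0 (g1 * d2 - g2 * d1); nra.
Qed.

Lemma cross_ReE (d g : C) : (Re (d^* * g + d * g^*))%:C = d^* * g + d * g^*.
Proof. by apply: conjC_fixedE; rewrite rmorphD !rmorphM /= !conjCK addrC. Qed.

Lemma rank_one_factor {m1 m2 : R} {mu : C} : 0 <= m1 -> 0 <= m2 ->
  mu^* * mu = (m1 * m2)%:C ->
  exists al be : C, [/\ al^* * al = m1%:C, be^* * al = mu & be^* * be = m2%:C].
Proof.
move=> m1_ge0 m2_ge0 hmu.
have [m10|m1_neq0] := eqVneq m1 0.
  have -> : mu = 0 by apply/eqP; rewrite -mul_conjC_eq0 mulrC hmu m10 mul0r.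
  exists 0, (Num.sqrt m2)%:C; rewrite m10; split; rewrite ?mulr0 //.
  by rewrite conjC_realc -rmorphM /= -expr2 sqr_sqrtr.
have ss : Num.sqrt m1 * Num.sqrt m1 = m1 by rewrite -expr2 sqr_sqrtr.
have s_neq0 : (Num.sqrt m1)%:C != 0 :> C.
  by rewrite eq_complex /= eqxx andbT sqrtr_eq0 -ltNge lt_def m1_neq0.
exists (Num.sqrt m1)%:C, (mu^* / (Num.sqrt m1)%:C); rewrite conjC_realc; split.
- by rewrite -rmorphM /= ss.
- by rewrite rmorphM /= fmorphV /= conjC_realc conjCK divfK.
- rewrite rmorphM /= fmorphV /= conjC_realc conjCK mulrACA [mu * _]mulrC hmu.
  by rewrite -invfM -rmorphM /= ss -fmorphV -rmorphM /=; congr (_%:C); field.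
Qed.

Lemma unit_phase (v : C) :
  exists ph : C, ph^* * ph = 1 /\ ph * v = (Num.sqrt (Re (v^* * v)))%:C.
Proof.
have [->|v_neq0] := eqVneq v 0.
  by exists 1; rewrite conjC1 !mulr1 !mulr0 /= sqrtr0.
set s := Num.sqrt _.
exists (s%:C / v); split; last by rewrite divfK.
rewrite rmorphM /= fmorphV /= conjC_realc mulrACA -invfM -rmorphM /= -expr2.
rewrite sqr_sqrtr ?Re_mul_conjC_ge0 //.
by rewrite mul_conjC_ReE mulfV // mulf_neq0 // conjC_eq0.
Qed.
End ComplexScalars.

Section TwoByTwo.
Context {R : rcfType}.
Local Notation C := R[i].
Local Notation Re := complex.Re.
Local Notation "x %:C" := (x%:C)%C.

(* [sesq2 h al be] is v^* H v and [trace2 h m1 mu m2] is tr (H X), for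
   H = [[h11, h12], [h21, h22]], v = (al, be) and X = [[m1, mu], [mu^*, m2]];
   at X = v v^* the two agree. *)
Definition sesq2 (h11 h12 h21 h22 al be : C) : C :=
  al^* * al * h11 + al^* * be * h12 + be^* * al * h21 + be^* * be * h22.

Definition trace2 (h11 h12 h21 h22 : C) (m1 : R) (mu : C) (m2 : R) : C :=
  m1%:C * h11 + mu^* * h12 + mu * h21 + m2%:C * h22.

Lemma sesq2_trace2 (h11 h12 h21 h22 : C) {al be mu : C} {m1 m2 : R} :
  al^* * al = m1%:C -> be^* * al = mu -> be^* * be = m2%:C ->
  sesq2 h11 h12 h21 h22 al be = trace2 h11 h12 h21 h22 m1 mu m2.
Proof.
move=> h1 h2 h3; have h4 : al^* * be = mu^* by rewrite -h2 rmorphM /= conjCK mulrC.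
by rewrite /sesq2 h1 h2 h3 h4 /trace2.
Qed.

Lemma trace2_pencil (h11 h12 h21 h22 : C) (t rho d1 d2 : R) (dl : C) :
  trace2 h11 h12 h21 h22 (1 - t + rho * d1) (rho%:C * dl) (t + rho * d2) =
  (1 - t)%:C * h11 + t%:C * h22 + rho%:C * trace2 h11 h12 h21 h22 d1 dl d2.
Proof. by rewrite /trace2 rmorphM /= conjC_realc !rmorphD !rmorphM /=; ring. Qed.

Lemma trace2_selfconj (h11 h12 h22 mu : C) (m1 m2 : R) :
  h11^* = h11 -> h22^* = h22 ->
  (trace2 h11 h12 h12^* h22 m1 mu m2)^* = trace2 h11 h12 h12^* h22 m1 mu m2.
Proof.
move=> h11J h22J.
rewrite /trace2 !(rmorphD, rmorphM) /= !conjC_realc !conjCK h11J h22J; ring.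
Qed.

Lemma trace2_kernel (g a p q b : C) : b != a ->
  exists (d1 d2 : R) (dl : C),
    [/\ dl != 0, trace2 1 g g^* 1 d1 dl d2 = 0 & trace2 a p q b d1 dl d2 = 0].
Proof.
rewrite -subr_eq0 => w_neq0; set w := b - a in w_neq0.
set P := a * g - p; set Q := a * g^* - q; set S := Q * w^* - P^* * w.
(* The phase of [dl] is chosen to make [dl * S] real; this is what makes the
   second condition solvable with a real [d2]. *)
pose dl := if S == 0 then 1 else S^*.
have dl_neq0 : dl != 0.
  by rewrite /dl; case: (S =P 0) => [_|/eqP S_neq0]; rewrite ?oner_eq0 ?conjC_eq0.
have dlSJ : (dl * S)^* = dl * S.
  rewrite /dl; case: (S =P 0) => [->|_]; first by rewrite mulr0 conjC0.
  by rewrite rmorphM /= conjCK mulrC.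
set X := dl^* * P + dl * Q.
have XwJ : (X * w^*)^* = X * w^*.
  apply/eqP; rewrite -subr_eq0; apply/eqP.
  have -> : (X * w^*)^* - X * w^* = (dl * S)^* - dl * S.
    by rewrite /X /S /P /Q /w !(rmorphD, rmorphM, rmorphB, rmorphN) /= !conjCK; ring.
  by rewrite dlSJ subrr.
set d2 := Re (X * w^*) / Re (w^* * w).
have d2w : d2%:C * w = X.
  rewrite /d2 rmorphM /= fmorphV /= conjC_fixedE // mul_conjC_ReE.
  by field; rewrite w_neq0 conjC_eq0.
set k := Re (dl^* * g + dl * g^*).
have kE : k%:C = dl^* * g + dl * g^* := cross_ReE dl g.
have d1E : (- d2 - k)%:C = - d2%:C - (dl^* * g + dl * g^*).
  by rewrite -kE rmorphB rmorphN.
exists (- d2 - k), d2, dl; split => //; rewrite /trace2 d1E; first by ring.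
have -> : d2%:C * b = d2%:C * w + d2%:C * a by rewrite /w; ring.
by rewrite d2w /X /P /Q; ring.
Qed.

Lemma sesq2_rank1 (u1 u2 al be : C) :
  (al * u1 + be * u2)^* * (al * u1 + be * u2) =
  sesq2 (u1^* * u1) (u1^* * u2) (u2^* * u1) (u2^* * u2) al be.
Proof. by rewrite /sesq2 rmorphD !rmorphM; ring. Qed.

Lemma sesq2_interpolate (g a p q b u1 u2 : C) (t : R) :
  0 <= t <= 1 -> Re (g^* * g) < 1 -> b != a ->
  exists al be : C,
    [/\ sesq2 1 g g^* 1 al be = 1,
        sesq2 a p q b al be = (1 - t)%:C * a + t%:C * b &
        (1 - t) * Re (u1^* * u1) + t * Re (u2^* * u2) <=
          Re (sesq2 (u1^* * u1) (u1^* * u2) (u2^* * u1) (u2^* * u2) al be)].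
Proof.
move=> /andP[t_ge0 t_le1] ng_lt1 b_neq_a.
have [d1 [d2 [dl [dl_neq0 traceG traceA]]]] := trace2_kernel g a p q b b_neq_a.
set nd := Re (dl^* * dl); set ng := Re (g^* * g); set k := Re (dl^* * g + dl * g^*).
have nd_gt0 : 0 < nd.
  rewrite lt_def Re_mul_conjC_ge0 andbT; apply: contra dl_neq0 => /eqP nd0.
  by rewrite -mul_conjC_eq0 mulrC -mul_conjC_ReE -/nd nd0.
have ng_ge0 : 0 <= ng := Re_mul_conjC_ge0 g.
have trG : d1 + d2 + k = 0.
  have : d1%:C + d2%:C + k%:C = 0 :> C.
    by rewrite cross_ReE -traceG /trace2 !mulr1; ring.
  by rewrite -!rmorphD => /(congr1 (@complex.Re R)).
have k2 : k ^+ 2 <= 4 * ng * nd := Re_cross_sqr_le g dl.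
have lead_lt0 : d1 * d2 - nd < 0.
  have : 4 * (d1 * d2) <= k ^+ 2 by have := sqr_ge0 (d1 - d2); nra.
  nra.
set E := Re (trace2 (u1^* * u1) (u1^* * u2) (u2^* * u1) (u2^* * u2) d1 dl d2).
have tt_ge0 : 0 <= t * (1 - t) by nra.
have [rho [root rhoE_ge0]] :=
  quadratic_root_signed _ (d1 * t + d2 * (1 - t)) _ E lead_lt0 tt_ge0.
set m1 := 1 - t + rho * d1; set m2 := t + rho * d2.
have m12 : m1 * m2 = rho ^+ 2 * nd by rewrite /m1 /m2; nra.
have [m1_ge0 m2_ge0] : 0 <= m1 /\ 0 <= m2.
  apply: (diag_ge0_of_trace1 (s := rho * k)); last by rewrite /m1 /m2; nra.
  have k2nd : k ^+ 2 <= 4 * nd by nra.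
  by rewrite m12 exprMn [4 * _]mulrCA; apply: ler_wpM2l; rewrite ?sqr_ge0.
have mu2 : (rho%:C * dl)^* * (rho%:C * dl) = (m1 * m2)%:C.
  by rewrite rmorphM /= conjC_realc mulrACA -mul_conjC_ReE -!rmorphM m12 expr2.
have [al [be [h1 h2 h3]]] := rank_one_factor m1_ge0 m2_ge0 mu2.
have sesqE h11 h12 h21 h22 : sesq2 h11 h12 h21 h22 al be =
    (1 - t)%:C * h11 + t%:C * h22 + rho%:C * trace2 h11 h12 h21 h22 d1 dl d2.
  by rewrite (sesq2_trace2 _ _ _ _ h1 h2 h3) trace2_pencil.
exists al, be; rewrite !sesqE traceG traceA !mulr0 !addr0; split => //.
  by rewrite !mulr1 -rmorphD subrK.
have trE : trace2 (u1^* * u1) (u1^* * u2) (u2^* * u1) (u2^* * u2) d1 dl d2 = E%:C.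
  apply/esym/conjC_fixedE.
  have -> : u2^* * u1 = (u1^* * u2)^* by rewrite rmorphM /= conjCK mulrC.
  by apply: trace2_selfconj; rewrite rmorphM /= conjCK mulrC.
rewrite trE -[u1^* * u1]mul_conjC_ReE -[u2^* * u2]mul_conjC_ReE.
by rewrite -!rmorphM -!rmorphD /= lerDl.
Qed.
End TwoByTwo.

Section HermitianDot.
Context {R : realType} {n : nat}.
Local Notation C := R[i].
Local Notation Re := complex.Re.
Local Notation "x %:C" := (x%:C)%C.
Implicit Types (u v y z : 'cV[C]_n) (c : C).

Definition hdot u v : C := (adjv u *m v) 0 0.

Lemma hdotE u v : hdot u v = \sum_k (u k 0)^* * v k 0.
Proof. by rewrite /hdot /adjv mxE; apply: eq_bigr => k _; rewrite !mxE. Qed.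

Lemma hdotDl u v z : hdot (u + v) z = hdot u z + hdot v z.
Proof.
by rewrite !hdotE -big_split; apply: eq_bigr => k _; rewrite !mxE rmorphD mulrDl.
Qed.

Lemma hdotDr u v z : hdot z (u + v) = hdot z u + hdot z v.
Proof. by rewrite !hdotE -big_split; apply: eq_bigr => k _; rewrite !mxE mulrDr. Qed.

Lemma hdotZl c u v : hdot (c *: u) v = c^* * hdot u v.
Proof.
by rewrite !hdotE mulr_sumr; apply: eq_bigr => k _; rewrite !mxE rmorphM mulrA.
Qed.

Lemma hdotZr c u v : hdot u (c *: v) = c * hdot u v.
Proof. by rewrite !hdotE mulr_sumr; apply: eq_bigr => k _; rewrite !mxE mulrCA. Qed.

Lemma hdot_conj u v : (hdot u v)^* = hdot v u.
Proof.
by rewrite !hdotE rmorph_sum; apply: eq_bigr => k _; rewrite rmorphM /= conjCK mulrC.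
Qed.

Lemma hdot_ge0 v : 0 <= hdot v v.
Proof. by rewrite hdotE; apply: sumr_ge0 => k _; rewrite mulrC mul_conjC_ge0. Qed.

Lemma hdot_eq0 v : hdot v v = 0 -> v = 0.
Proof.
rewrite hdotE => /psumr_eq0P vv0; apply/matrixP => k j; rewrite ord1 mxE.
have /vv0/(_ k isT)/eqP : forall i : 'I_n, true -> 0 <= (v i 0)^* * v i 0.
  by move=> i _; rewrite mulrC mul_conjC_ge0.
by rewrite mulrC mul_conjC_eq0 => /eqP.
Qed.

Lemma vnormE v : vnorm v = sqrtC (hdot v v).
Proof.
by rewrite /vnorm hdotE; congr sqrtC; apply: eq_bigr => k _; rewrite normCKC.
Qed.

Lemma fAE (A : 'M[C]_n) y : fA A y = hdot y (A *m y).
Proof. by rewrite /fA /hdot mulmxA. Qed.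

Lemma hdot_comb2 (al be : C) y1 y2 z1 z2 :
  hdot (al *: y1 + be *: y2) (al *: z1 + be *: z2) =
  sesq2 (hdot y1 z1) (hdot y1 z2) (hdot y2 z1) (hdot y2 z2) al be.
Proof. by rewrite hdotDl !hdotDr !hdotZl !hdotZr /sesq2; ring. Qed.

Lemma hdot_phase c u v : c^* * c = 1 -> hdot (c *: u) (c *: v) = hdot u v.
Proof. by move=> cc; rewrite hdotZl hdotZr mulrA cc mul1r. Qed.

Lemma fA_phase (A : 'M[C]_n) c y : c^* * c = 1 -> fA A (c *: y) = fA A y.
Proof. by move=> cc; rewrite !fAE -scalemxAr hdot_phase. Qed.

Lemma unit_sphereE y : unit_sphere y <-> hdot y y = 1.
Proof.
rewrite /unit_sphere vnormE; split => [yy|->]; last exact: sqrtC1.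
by rewrite -[hdot y y]sqrtCK yy expr1n.
Qed.

Lemma cball_unitE {x y} {r : R} : hdot x x = 1 -> hdot y y = 1 -> 0 < r ->
  cball x r y <-> 1 - r ^+ 2 / 2 < Re (hdot x y).
Proof.
move=> xx yy r_gt0; rewrite /cball vnormE.
have -> : r%:C = sqrtC (r ^+ 2)%:C :> C by rewrite rmorphXn sqrCK // ler0c ltW.
rewrite ltr_sqrtC ?nnegrE ?hdot_ge0 ?ler0c ?sqr_ge0 //.
have -> : y - x = (-1) *: x + 1 *: y by rewrite scaleN1r scale1r addrC.
rewrite hdot_comb2 xx yy -[hdot y x]hdot_conj.
have -> : sesq2 1 (hdot x y) (hdot x y)^* 1 (-1) 1 = (2 - 2 * Re (hdot x y))%:C.
  rewrite /sesq2 rmorphN conjC1; case: (hdot x y) => a b.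
  by apply/eqP; rewrite eq_complex /=; apply/andP; split; apply/eqP; ring.
by rewrite ltcR; split; lra.
Qed.

Lemma unit_gram_lt1 {y1 y2} : hdot y1 y1 = 1 -> hdot y2 y2 = 1 ->
  Re ((hdot y1 y2)^* * hdot y1 y2) < 1 \/ y2 = hdot y1 y2 *: y1.
Proof.
move=> y1y1 y2y2; set g := hdot y1 y2.
have resE : hdot (y2 - g *: y1) (y2 - g *: y1) = 1 - g^* * g.
  have -> : y2 - g *: y1 = (- g) *: y1 + 1 *: y2 by rewrite scale1r scaleNr addrC.
  rewrite hdot_comb2 y1y1 y2y2 -[hdot y2 y1]hdot_conj -/g.
  by rewrite /sesq2 rmorphN conjC1; ring.
have [lt1|ge1] := ltP (Re (g^* * g)) 1; [by left | right].
have := hdot_ge0 (y2 - g *: y1).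
rewrite resE lecE => /andP[_]; rewrite raddfB /= subr_ge0 => le1.
have gg1 : Re (g^* * g) = 1 by apply/le_anti; rewrite le1 ge1.
have /hdot_eq0/eqP : hdot (y2 - g *: y1) (y2 - g *: y1) = 0.
  by rewrite resE -mul_conjC_ReE gg1; apply/eqP; rewrite subr_eq0.
by rewrite subr_eq0 => /eqP.
Qed.
End HermitianDot.

Theorem lemma2 (R : realType) (n : nat) (A : 'M[R[i]]_n) (x : 'cV[R[i]]_n) (r : R) :
  unit_sphere x -> 0 < r ->
  convexC (fun z : R[i] => exists y : 'cV[R[i]]_n,
             [/\ unit_sphere y, cball x r y & z = fA A y]).
Proof.
move=> /unit_sphereE xx r_gt0 z1 z2 [y1 [/unit_sphereE y1y1 y1_ball ->]].
move=> [y2 [/unit_sphereE y2y2 y2_ball ->]] t t01.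
have [f_eq|f_neq] := eqVneq (fA A y2) (fA A y1).
  exists y1; split=> //; first exact/unit_sphereE.
  by rewrite f_eq -mulrDl -rmorphD subrK mul1r.
have g_lt1 : complex.Re ((hdot y1 y2)^* * hdot y1 y2) < 1.
  have [//|y2E] := unit_gram_lt1 y1y1 y2y2.
  have gg1 : (hdot y1 y2)^* * hdot y1 y2 = 1.
    by rewrite -y2y2 [in RHS]y2E hdotZl hdotZr y1y1 mulr1.
  by move: f_neq; rewrite [in fA A y2]y2E fA_phase ?eqxx.
set u1 := hdot x y1; set u2 := hdot x y2.
have [al [be [gram_y fA_y ux]]] := sesq2_interpolate (hdot y1 y2) (fA A y1)
  (hdot y1 (A *m y2)) (hdot y2 (A *m y1)) (fA A y2) u1 u2 t t01 g_lt1 f_neq.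
set y := al *: y1 + be *: y2.
have yy : hdot y y = 1 by rewrite hdot_comb2 y1y1 y2y2 -[hdot y2 y1]hdot_conj gram_y.
have fy : fA A y = (1 - t)%:C%C * fA A y1 + t%:C%C * fA A y2.
  by rewrite fAE mulmxDr -!scalemxAr hdot_comb2 -!fAE fA_y.
have xyE : hdot x y = al * u1 + be * u2 by rewrite hdotDr !hdotZr.
have [ph [ph_unit phE]] := unit_phase (hdot x y).
exists (ph *: y); split; last by rewrite fA_phase.
  by apply/unit_sphereE; rewrite hdot_phase.
apply/(cball_unitE xx _ r_gt0); first by rewrite hdot_phase.
rewrite hdotZr phE /=.
have u1_gt := (cball_unitE xx y1y1 r_gt0).1 y1_ball.
have u2_gt := (cball_unitE xx y2y2 r_gt0).1 y2_ball.
apply: (lt_sqrt_convex t01 u1_gt u2_gt (sqr_Re_le_mul_conjC u1)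
  (sqr_Re_le_mul_conjC u2)).
by rewrite xyE sesq2_rank1.
Qed.
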